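(* For both \textsc{OneMinMax} and \textsc{LOTZ}, the hypervolume contribution $\mathrm{HVC}(x,P)$ with a reference point $(r_1,r_2)$ satisfying $r_1\le -1$ and $r_2\le -1$ is diversity-favouring on $\{0,1\}^n\setminus\{0^n,1^n\}$.
   Context: Search space $\{0,1\}^n$; objectives maximised. $\textsc{OneMinMax}(x)=(\sum_ix_i,\,n-\sum_ix_i)$; $\textsc{LOTZ}(x)=(\mathrm{LO}(x),\mathrm{TZ}(x))$ with $\mathrm{LO}$ the number of leading ones and $\mathrm{TZ}$ the number of trailing zeros. Dominance: $y$ dominates $x$ if $f_i(y)\ge f_i(x)$ for all $i$, strictly for some $i$. Pareto set $X^*$ (non-dominated points), Pareto front $F^*=f(X^* )$. Populations $P$ are sets of mutually non-dominated points with distinct objective vectors (as maintained by SEMO/GSEMO). HVC: sort $P$ by increasing $f_1$ as $x_1,\dots,x_\mu$, set $f_1(x_0)=r_1$, $f_2(x_{\mu+1})=r_2$, and $\mathrm{HVC}(x_i,P)=(f_1(x_i)-f_1(x_{i-1}))(f_2(x_i)-f_2(x_{i+1}))$. Good: w.r.t. $P$, $x\in P\cap X^*$ is good if some Hamming neighbour $y$ of $x$ satisfies $y\in X^*$ and $f(y)\notin f(P)$; otherwise bad. A measure $\mathrm{score}(x,P)$ is diversity-favouring on $S\subseteq\{0,1\}^n$ (w.r.t. $f$) if for every population $P$ and all $x,y\in P\cap X^*\cap S$ with $x$ bad and $y$ good, $\mathrm{score}(x,P)<\mathrm{score}(y,P)$. *)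

From mathcomp Require Import all_boot all_order all_algebra.
Set Implicit Arguments. Unset Strict Implicit. Unset Printing Implicit Defensive.
Import Order.TTheory GRing.Theory Num.Theory.

Notation bs n := {ffun 'I_n -> bool}.

Definition bits n (x : bs n) : seq bool := [seq x i | i <- enum 'I_n].

Definition ones n (x : bs n) : nat := count id (bits x).

Definition OneMinMax n (x : bs n) : nat * nat := (ones x, n - ones x).

Definition LO n (x : bs n) : nat := find negb (bits x).
Definition TZ n (x : bs n) : nat := find id (rev (bits x)).
Definition LOTZ n (x : bs n) : nat * nat := (LO x, TZ x).

Section Dom.
Variable n : nat.
Variable f : bs n -> nat * nat.

Definition dominates (y x : bs n) : bool :=
  [&& (f x).1 <= (f y).1, (f x).2 <= (f y).2 &
      ((f x).1 < (f y).1) || ((f x).2 < (f y).2)]%N.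

Definition pareto (x : bs n) : bool := [forall y, ~~ dominates y x].

Definition valid_pop (P : {set bs n}) : Prop :=
  (forall x y, x \in P -> y \in P -> ~~ dominates x y) /\
  (forall x y, x \in P -> y \in P -> f x = f y -> x = y).

Definition hamming_neighbour (x y : bs n) : bool :=
  #|[set i | x i != y i]| == 1%N.

Definition good (P : {set bs n}) (x : bs n) : Prop :=
  [/\ x \in P, pareto x &
   exists y, [/\ hamming_neighbour x y, pareto y & f y \notin [seq f z | z in P]]].

Definition bad (P : {set bs n}) (x : bs n) : Prop :=
  [/\ x \in P, pareto x & ~ good P x].

Definition diversity_favouring {R : numDomainType}
    (score : bs n -> {set bs n} -> R) (S : pred (bs n)) : Prop :=
  forall P : {set bs n}, valid_pop P ->
  forall x y : bs n, x \in P -> y \in P -> pareto x -> pareto y ->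
    x \in S -> y \in S -> bad P x -> good P y ->
    (score x P < score y P)%R.

(* Hypervolume contribution with reference point (r1, r2).
   x_{i-1}: element of P with the largest f_1 value below f_1(x) (if none, f_1(x_0) = r1);
   x_{i+1}: element of P with the smallest f_1 value above f_1(x) (if none, f_2(x_{mu+1}) = r2). *)
Definition HVC {R : numDomainType} (r1 r2 : R) (x : bs n) (P : {set bs n}) : R :=
  let prev1 : R :=
    match [pick y in P | ((f y).1 < (f x).1)%N &&
             [forall z in P, ((f z).1 < (f x).1)%N ==> ((f z).1 <= (f y).1)%N]] with
    | Some y => ((f y).1)%:R%R
    | None => r1
    end in
  let next2 : R :=
    match [pick y in P | ((f x).1 < (f y).1)%N &&
             [forall z in P, ((f x).1 < (f z).1)%N ==> ((f y).1 <= (f z).1)%N]] with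
    | Some y => ((f y).2)%:R%R
    | None => r2
    end in
  ((((f x).1)%:R - prev1) * (((f x).2)%:R - next2))%R.

End Dom.

Definition not_extreme n : pred (bs n) :=
  fun x => (x != [ffun => false]) && (x != [ffun => true]).

From mathcomp Require Import all_boot all_order all_algebra.
From mathcomp Require Import zify lra.
Import Order.TTheory GRing.Theory Num.Theory.
Set Implicit Arguments. Unset Strict Implicit. Unset Printing Implicit Defensive.

(* For both problems the Pareto front lies on the line f_1 + f_2 = n, and two
   Pareto optimal Hamming neighbours are exactly one step apart along it.
   HVC(x, P) is the product of the gap from x to its predecessor in f_1 and the
   gap to its successor in f_2; since r_1, r_2 <= -1, both gaps are at least 1.
   A bad point that is not extreme has both of its front neighbours in P, so its
   contribution is exactly 1.  A good point misses one of them, which makes the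
   corresponding gap at least 2, and hence its contribution at least 2. *)

Section HypervolumeContribution.
Variables (R : realFieldType) (n : nat) (f : bs n -> nat * nat) (r1 r2 : R).
Hypothesis r1_le : (r1 <= -1)%R.
Hypothesis r2_le : (r2 <= -1)%R.

Definition hvc_width (x : bs n) (P : {set bs n}) : R :=
  ((f x).1)%:R -
  match [pick y in P | ((f y).1 < (f x).1)%N &&
           [forall z in P, ((f z).1 < (f x).1)%N ==> ((f z).1 <= (f y).1)%N]] with
  | Some y => ((f y).1)%:R
  | None => r1
  end.

Definition hvc_height (x : bs n) (P : {set bs n}) : R :=
  ((f x).2)%:R -
  match [pick y in P | ((f x).1 < (f y).1)%N &&
           [forall z in P, ((f x).1 < (f z).1)%N ==> ((f y).1 <= (f z).1)%N]] with
  | Some y => ((f y).2)%:R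
  | None => r2
  end.

Lemma HVCE x P : HVC f r1 r2 x P = (hvc_width x P * hvc_height x P)%R.
Proof. by []. Qed.

Lemma valid_pop_lt1 (P : {set bs n}) a b : valid_pop f P -> a \in P -> b \in P ->
  ((f a).1 < (f b).1)%N -> ((f b).2 < (f a).2)%N.
Proof.
move=> [nondom _] aP bP lt_ab; have := nondom b a bP aP.
by rewrite /dominates lt_ab ltnW //=; lia.
Qed.

Lemma valid_pop_lt2 (P : {set bs n}) a b : valid_pop f P -> a \in P -> b \in P ->
  ((f b).2 < (f a).2)%N -> ((f a).1 < (f b).1)%N.
Proof. by move=> [nondom _] aP bP; have := nondom a b aP bP; rewrite /dominates; lia. Qed.

Lemma valid_pop_eq (P : {set bs n}) a b : valid_pop f P -> a \in P -> b \in P ->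
  (f a).1 = (f b).1 -> (f a).2 = (f b).2.
Proof.
move=> [nondom _] aP bP eq_ab; have := nondom a b aP bP; have := nondom b a bP aP.
by rewrite /dominates eq_ab leqnn ltnn /=; lia.
Qed.

Lemma hvc_width_ge1 (P : {set bs n}) x : (1 <= hvc_width x P)%R.
Proof.
rewrite /hvc_width; case: pickP => [y /and3P[_ lt_yx _] | _].
  by move: lt_yx; rewrite -(ler_nat R) -natr1; lra.
by have := ler0n R (f x).1; have := r1_le; lra.
Qed.

Lemma hvc_width_eq1 (P : {set bs n}) x z : z \in P -> ((f z).1.+1 = (f x).1)%N ->
  hvc_width x P = 1%R.
Proof.
move=> zP zx; rewrite /hvc_width.
case: pickP => [y /and3P[_ lt_yx /forall_inP le_y] | none].
  have le_zy : ((f z).1 <= (f y).1)%N by apply: (implyP (le_y z zP)); rewrite -zx.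
  have -> : (f x).1 = (f y).1.+1 by lia.
  by rewrite -natr1 addrC addKr.
have /negP[] := none z; rewrite zP -zx ltnSn /=.
by apply/forall_inP => u _; apply/implyP; rewrite ltnS.
Qed.

Lemma hvc_width_ge2 (P : {set bs n}) x : (0 < (f x).1)%N ->
  {in P, forall z, (f z).1.+1 != (f x).1} -> (2 <= hvc_width x P)%R.
Proof.
move=> x_gt0 no_pred; rewrite /hvc_width; case: pickP => [y /and3P[yP lt_yx _] | _].
  have : ((f y).1.+2 <= (f x).1)%N by have := no_pred y yP; lia.
  by rewrite -(ler_nat R) -!natr1; lra.
by move: x_gt0; rewrite -(ler_nat R); have := r1_le; lra.
Qed.

Lemma hvc_height_ge1 (P : {set bs n}) x : valid_pop f P -> x \in P ->
  (1 <= hvc_height x P)%R.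
Proof.
move=> vP xP; rewrite /hvc_height; case: pickP => [y /and3P[yP lt_xy _] | _].
  by move: (valid_pop_lt1 vP xP yP lt_xy); rewrite -(ler_nat R) -natr1; lra.
by have := ler0n R (f x).2; have := r2_le; lra.
Qed.

Lemma hvc_height_eq1 (P : {set bs n}) x z : valid_pop f P -> z \in P ->
  (f z).1 = (f x).1.+1 -> (f z).2.+1 = (f x).2 -> hvc_height x P = 1%R.
Proof.
move=> vP zP z1 z2; rewrite /hvc_height.
case: pickP => [y /and3P[yP lt_xy /forall_inP le_y] | none].
  have le_yz : ((f y).1 <= (f z).1)%N by apply: (implyP (le_y z zP)); rewrite z1.
  have -> : (f y).2 = (f z).2 by apply: (valid_pop_eq vP yP zP); lia.
  by rewrite -z2 -natr1 addrC addKr.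
have /negP[] := none z; rewrite zP z1 ltnSn /=.
by apply/forall_inP => u _; apply/implyP.
Qed.

Lemma hvc_height_ge2 (P : {set bs n}) x : valid_pop f P -> x \in P -> (0 < (f x).2)%N ->
  {in P, forall z, (f z).2.+1 != (f x).2} -> (2 <= hvc_height x P)%R.
Proof.
move=> vP xP x_gt0 no_pred; rewrite /hvc_height; case: pickP => [y /and3P[yP lt_xy _] | _].
  have : ((f y).2.+2 <= (f x).2)%N.
    by have := valid_pop_lt1 vP xP yP lt_xy; have := no_pred y yP; lia.
  by rewrite -(ler_nat R) -!natr1; lra.
by move: x_gt0; rewrite -(ler_nat R); have := r2_le; lra.
Qed.

Hypothesis sum_le : forall x, ((f x).1 + (f x).2 <= n)%N.
Hypothesis pareto_sum : forall x, pareto f x -> ((f x).1 + (f x).2 = n)%N.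
Hypothesis pareto_step_down : forall x, pareto f x -> x != [ffun => false] ->
  exists w, [/\ hamming_neighbour x w, pareto f w & (f w).1.+1 = (f x).1].
Hypothesis pareto_step_up : forall x, pareto f x -> x != [ffun => true] ->
  exists w, [/\ hamming_neighbour x w, pareto f w & (f w).1 = (f x).1.+1].
Hypothesis pareto_neighbour_step : forall x w, pareto f x -> pareto f w ->
  hamming_neighbour x w -> (f w).1.+1 = (f x).1 \/ (f w).1 = (f x).1.+1.

Lemma bad_neighbour_in_pop (P : {set bs n}) x w : bad f P x ->
  hamming_neighbour x w -> pareto f w -> exists2 z, z \in P & f z = f w.
Proof.
move=> [xP px not_good] xw pw.
have [/imageP[z zP ->]|fw_new] := boolP (f w \in [seq f z | z in P]); first by exists z.
by case: not_good; split => //; exists w.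
Qed.

Lemma hvc_bad (P : {set bs n}) x : valid_pop f P -> bad f P x -> not_extreme x ->
  HVC f r1 r2 x P = 1%R.
Proof.
move=> vP xbad /andP[x_ne0 x_ne1]; have [xP px _] := xbad.
have [w [xw pw w1]] := pareto_step_down px x_ne0.
have [z zP fzw] := bad_neighbour_in_pop xbad xw pw.
have [w' [xw' pw' w'1]] := pareto_step_up px x_ne1.
have [z' z'P fzw'] := bad_neighbour_in_pop xbad xw' pw'.
rewrite HVCE (hvc_width_eq1 (z := z)) ?fzw // (hvc_height_eq1 (z := z')) ?fzw' ?mulr1 //.
by have := pareto_sum px; have := pareto_sum pw'; lia.
Qed.

Lemma hvc_good (P : {set bs n}) y : valid_pop f P -> good f P y ->
  (2 <= HVC f r1 r2 y P)%R.
Proof.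
move=> vP [yP py [w [yw pw fw_new]]].
have fw_notin z : z \in P -> f z <> f w by move=> zP fzw; rewrite -fzw image_f in fw_new.
have := pareto_sum py; have := pareto_sum pw => sum_w sum_y.
have width_ge1 := hvc_width_ge1 P y; have height_ge1 := hvc_height_ge1 vP yP.
(* A point of P one step from y towards w would have the objective vector of w. *)
rewrite HVCE; case: (pareto_neighbour_step py pw yw) => w1.
- have : (2 <= hvc_width y P)%R.
    apply: hvc_width_ge2 => [|z zP]; first lia.
    apply/eqP => z1; apply: (fw_notin z zP); have := sum_le z.
    have := valid_pop_lt1 vP zP yP (ltac:(lia)).
    by move=> *; apply: injective_projections; lia.
  by nra.
- have : (2 <= hvc_height y P)%R.
    apply: hvc_height_ge2 => // [|z zP]; first lia.
    apply/eqP => z2; apply: (fw_notin z zP); have := sum_le z.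
    have := valid_pop_lt2 vP yP zP (ltac:(lia)).
    by move=> *; apply: injective_projections; lia.
  by nra.
Qed.

Theorem hvc_diversity_favouring : diversity_favouring f (HVC f r1 r2) (@not_extreme n).
Proof.
move=> P vP x y _ _ _ _ x_ne _ xbad ygood.
by rewrite (hvc_bad vP xbad x_ne); have := hvc_good vP ygood; lra.
Qed.

End HypervolumeContribution.

Section BitStrings.
Variable n : nat.

Lemma size_bits (x : bs n) : size (bits x) = n.
Proof. by rewrite size_map size_enum_ord. Qed.

Lemma nth_bits (x : bs n) i (lt_in : (i < n)%N) d : nth d (bits x) i = x (Ordinal lt_in).
Proof.
rewrite (nth_map (Ordinal lt_in)) ?size_enum_ord //; congr (x _).
by apply: val_inj; rewrite /= nth_enum_ord.
Qed.

Lemma ones_card (x : bs n) : ones x = #|[set i | x i]|.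
Proof.
rewrite /ones count_map cardsE cardE /enum_mem size_filter count_filter.
by apply: eq_count => i; rewrite /= andbT.
Qed.

Lemma ones_le (x : bs n) : (ones x <= n)%N.
Proof. by rewrite -[X in (_ <= X)%N](size_bits x) count_size. Qed.

Lemma hamming_neighbourC (x y : bs n) : hamming_neighbour x y = hamming_neighbour y x.
Proof. by congr (_ == _); apply: eq_card => i; rewrite !inE eq_sym. Qed.

Definition flip (x : bs n) (i : 'I_n) : bs n := [ffun j => if j == i then ~~ x i else x j].

Lemma hamming_neighbour_flip (x : bs n) i : hamming_neighbour x (flip x i).
Proof.
apply/cards1P; exists i; apply/setP => j; rewrite !inE ffunE.
by case: (eqVneq j i) => [->|]; [case: (x i) | rewrite eqxx].
Qed.

Lemma hamming_neighbourP (x w : bs n) : hamming_neighbour x w -> exists i, w = flip x i.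
Proof.
move/cards1P => [i diff_i]; exists i; apply/ffunP => j; rewrite ffunE.
have := congr1 (fun A : {set 'I_n} => j \in A) diff_i; rewrite !inE.
case: (eqVneq j i) => [->|_] /=; first by case: (x i); case: (w i).
by move/negbT/negbNE/eqP.
Qed.

Lemma ones_flip_true (x : bs n) i : x i -> (ones (flip x i)).+1 = ones x.
Proof.
move=> xi; rewrite !ones_card.
suff -> : [set j | flip x i j] = [set j | x j] :\ i by rewrite [in RHS](cardsD1 i) inE xi.
by apply/setP => j; rewrite !inE ffunE; case: (eqVneq j i) => [->|]; rewrite ?xi.
Qed.

Lemma ones_flip_false (x : bs n) i : ~~ x i -> ones (flip x i) = (ones x).+1.
Proof.
move=> xi; rewrite !ones_card.
suff -> : [set j | flip x i j] = i |: [set j | x j] by rewrite cardsU1 inE xi.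
by apply/setP => j; rewrite !inE ffunE; case: (eqVneq j i) => [->|]; rewrite ?xi.
Qed.

Lemma OneMinMax_sum (x : bs n) : ((OneMinMax x).1 + (OneMinMax x).2 = n)%N.
Proof. by rewrite /= subnKC ?ones_le. Qed.

Lemma OneMinMax_pareto (x : bs n) : pareto (@OneMinMax n) x.
Proof.
apply/forallP => y; rewrite /dominates.
by have := OneMinMax_sum x; have := OneMinMax_sum y; lia.
Qed.

Lemma OneMinMax_step_down (x : bs n) : x != [ffun => false] -> exists w,
  [/\ hamming_neighbour x w, pareto (@OneMinMax n) w & (ones w).+1 = ones x].
Proof.
move=> x_ne0; have [i xi] : exists i, x i.
  apply/existsP; apply: contraR x_ne0 => /existsPn x_false.
  by apply/eqP/ffunP => i; rewrite ffunE; apply/negbTE.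
by exists (flip x i); rewrite hamming_neighbour_flip OneMinMax_pareto ones_flip_true.
Qed.

Lemma OneMinMax_step_up (x : bs n) : x != [ffun => true] -> exists w,
  [/\ hamming_neighbour x w, pareto (@OneMinMax n) w & ones w = (ones x).+1].
Proof.
move=> x_ne1; have [i xi] : exists i, ~~ x i.
  apply/existsP; apply: contraR x_ne1 => /existsPn x_true.
  by apply/eqP/ffunP => i; rewrite ffunE; apply/negbNE.
by exists (flip x i); rewrite hamming_neighbour_flip OneMinMax_pareto ones_flip_false.
Qed.

Lemma OneMinMax_neighbour_step (x w : bs n) : hamming_neighbour x w ->
  (ones w).+1 = ones x \/ ones w = (ones x).+1.
Proof.
move=> /hamming_neighbourP[i ->].
by case: (boolP (x i)) => xi; [left; apply: ones_flip_true | right; apply: ones_flip_false].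
Qed.

Definition prefix (k : nat) : bs n := [ffun i : 'I_n => (i < k)%N].

Lemma bits_prefix k : (k <= n)%N -> bits (prefix k) = nseq k true ++ nseq (n - k) false.
Proof.
move=> le_kn; apply: (@eq_from_nth _ false); first by rewrite size_cat !size_nseq size_bits; lia.
move=> i; rewrite size_bits => lt_in.
by rewrite nth_bits ffunE nth_cat size_nseq !nth_nseq if_same; case: ltnP.
Qed.

Lemma LO_prefix k : (k <= n)%N -> LO (prefix k) = k.
Proof.
move=> le_kn; rewrite /LO bits_prefix // find_cat has_nseq andbF.
by rewrite find_nseq size_nseq /= mul0n addn0.
Qed.

Lemma TZ_prefix k : (k <= n)%N -> TZ (prefix k) = (n - k)%N.
Proof.
move=> le_kn; rewrite /TZ bits_prefix // rev_cat !rev_nseq find_cat has_nseq andbF.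
by rewrite find_nseq size_nseq /= mul0n addn0.
Qed.

Lemma find_negb_add_find_rev_le (s : seq bool) : (find negb s + find id (rev s) <= size s)%N.
Proof.
elim: s => [|[] s IHs] //=.
  rewrite rev_cons -cats1 find_cat; case: ifP => [_|/negbT no_true]; first lia.
  by move: IHs; rewrite (hasNfind no_true) size_rev /=; lia.
by rewrite add0n (leq_trans (find_size _ _)) // size_rev.
Qed.

Lemma LO_add_TZ_le (x : bs n) : (LO x + TZ x <= n)%N.
Proof. by rewrite -[X in (_ <= X)%N](size_bits x) find_negb_add_find_rev_le. Qed.

Lemma prefix_pareto k : (k <= n)%N -> pareto (@LOTZ n) (prefix k).
Proof.
move=> le_kn; apply/forallP => y; rewrite /dominates /= LO_prefix // TZ_prefix //.
by have := LO_add_TZ_le y; lia.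
Qed.

Lemma ones_prefix k : (k <= n)%N -> ones (prefix k) = k.
Proof.
by move=> le_kn; rewrite /ones bits_prefix // count_cat !count_nseq /= mul1n mul0n addn0.
Qed.

Lemma prefixS k (lt_kn : (k < n)%N) : prefix k.+1 = flip (prefix k) (Ordinal lt_kn).
Proof.
apply/ffunP => i; rewrite !ffunE -val_eqE /= ltnS leq_eqVlt.
by case: eqVneq => [->|]; rewrite ?ltnn.
Qed.

Lemma LOTZ_pareto_sum (x : bs n) : pareto (@LOTZ n) x -> (LO x + TZ x = n)%N.
Proof.
have := LO_add_TZ_le x => le_n; have le_LOn : (LO x <= n)%N by lia.
move=> /forallP /(_ (prefix (LO x))); rewrite /dominates /= LO_prefix ?TZ_prefix //.
lia.
Qed.

Lemma LOTZ_pareto_prefix (x : bs n) : pareto (@LOTZ n) x -> x = prefix (LO x).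
Proof.
move=> /LOTZ_pareto_sum sum_n; apply/ffunP => -[i lt_in]; rewrite ffunE /=.
have [lt_iLO|le_LOi] := ltnP i (LO x).
  by have := before_find false lt_iLO; rewrite nth_bits => /negbFE.
have lt_TZ : (n - i.+1 < TZ x)%N by lia.
have := before_find false lt_TZ; rewrite nth_rev size_bits; last lia.
by rewrite (_ : n - (n - i.+1).+1 = i)%N ?nth_bits //; lia.
Qed.

Lemma LOTZ_step_down (x : bs n) : pareto (@LOTZ n) x -> x != [ffun => false] -> exists w,
  [/\ hamming_neighbour x w, pareto (@LOTZ n) w & (LO w).+1 = LO x].
Proof.
move=> px x_ne0; have x_prefix := LOTZ_pareto_prefix px.
have [k LO_k] : exists k, LO x = k.+1.
  case LO_x: (LO x) => [|k]; last by exists k.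
  by case/eqP: x_ne0; rewrite x_prefix LO_x; apply/ffunP => i; rewrite !ffunE.
have lt_kn : (k < n)%N by have := LOTZ_pareto_sum px; lia.
exists (prefix k); rewrite prefix_pareto ?LO_prefix ?LO_k 1?ltnW //.
by rewrite x_prefix LO_k (prefixS lt_kn) hamming_neighbourC hamming_neighbour_flip.
Qed.

Lemma LOTZ_step_up (x : bs n) : pareto (@LOTZ n) x -> x != [ffun => true] -> exists w,
  [/\ hamming_neighbour x w, pareto (@LOTZ n) w & LO w = (LO x).+1].
Proof.
move=> px x_ne1; have x_prefix := LOTZ_pareto_prefix px.
have lt_n : (LO x < n)%N.
  rewrite ltn_neqAle -[X in (_ <= X)%N](LOTZ_pareto_sum px) leq_addr andbT.
  apply: contra_neq x_ne1 => LOn.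
  by rewrite x_prefix LOn; apply/ffunP => i; rewrite !ffunE ltn_ord.
exists (prefix (LO x).+1); rewrite prefix_pareto ?LO_prefix //.
by rewrite {1}x_prefix (prefixS lt_n) hamming_neighbour_flip.
Qed.

Lemma LOTZ_neighbour_step (x w : bs n) : pareto (@LOTZ n) x -> pareto (@LOTZ n) w ->
  hamming_neighbour x w -> (LO w).+1 = LO x \/ LO w = (LO x).+1.
Proof.
move=> px pw /OneMinMax_neighbour_step.
have ones_LO y : pareto (@LOTZ n) y -> ones y = LO y.
  move=> py; rewrite {1}(LOTZ_pareto_prefix py) ones_prefix //.
  by have := LOTZ_pareto_sum py; lia.
by rewrite !ones_LO.
Qed.

End BitStrings.

Theorem lemma1 (R : realFieldType) (n : nat) (r1 r2 : R) :
  (r1 <= -1)%R -> (r2 <= -1)%R ->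
  diversity_favouring (@OneMinMax n) (HVC (@OneMinMax n) r1 r2) (@not_extreme n) /\
  diversity_favouring (@LOTZ n) (HVC (@LOTZ n) r1 r2) (@not_extreme n).
Proof.
move=> r1_le r2_le; split; apply: hvc_diversity_favouring => //.
- by move=> x; rewrite OneMinMax_sum.
- by move=> x _; apply: OneMinMax_sum.
- by move=> x _; apply: OneMinMax_step_down.
- by move=> x _; apply: OneMinMax_step_up.
- by move=> x w _ _; apply: OneMinMax_neighbour_step.
- exact: LO_add_TZ_le.
- exact: LOTZ_pareto_sum.
- exact: LOTZ_step_down.
- exact: LOTZ_step_up.
- exact: LOTZ_neighbour_step.
Qed.
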